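(* Assume the standing assumptions (R), (B), (C), (Lip), (E), (Q) below hold. Let $C_S$ be the constant with $\mathbb{E}_{\mathbf{x}}[\sup_{\boldsymbol\theta\in\boldsymbol\Theta}|\hat J(\boldsymbol\theta;\mathbf{x}_1^N)-J(\boldsymbol\theta)|]\le C_S/\sqrt N$ for all $N$, and $C_{\boldsymbol\theta}$ the constant with $\mathbb{E}_{\mathbf{x}}[\sup_{\|\boldsymbol\theta-\boldsymbol\theta^*\|_2\le\delta}|\Delta_N(\boldsymbol\theta)|]\le C_{\boldsymbol\theta}\sqrt P\delta/\sqrt N$ for all $\delta>0$ and all $N$. Then for every $\epsilon>0$ and all $N\ge N':=16C_S^2/(\epsilon^2\lambda^2\eta^4)$, with probability at least $1-\epsilon$, $$\sqrt N\,\|\hat{\boldsymbol\theta}_N-\boldsymbol\theta^*\|_2\le\frac{8C_{\boldsymbol\theta}\sqrt P}{\epsilon\lambda}.$$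
   Context: Let $p$ be a probability density on $\mathbb{R}^D$ with support $\mathcal{X}$, where $\mathcal{X}$ is either $\mathbb{R}^D$ or an open bounded subset of $\mathbb{R}^D$ with piecewise smooth boundary $\partial\mathcal{X}$. Let $\mathbf{x}_1,\dots,\mathbf{x}_N$ (written $\mathbf{x}_1^N$) be i.i.d. samples from $p$; $\mathbb{E}_{\mathbf{x}}$ denotes expectation over a generic $\mathbf{x}\sim p$ or over the sample. Let $\boldsymbol\Theta\subset\mathbb{R}^P$ and let $s(\cdot;\boldsymbol\theta):\mathbb{R}^D\to\mathbb{R}^D$ be a parametric model; $\nabla_{\mathbf{x}}s(\mathbf{x};\boldsymbol\theta)$ is the $D\times D$ Jacobian. Define $\ell(\mathbf{x};\boldsymbol\theta)=\mathrm{tr}(\nabla_{\mathbf{x}}s(\mathbf{x};\boldsymbol\theta))+\tfrac12\|s(\mathbf{x};\boldsymbol\theta)\|_2^2$, $J(\boldsymbol\theta)=\mathbb{E}_{\mathbf{x}}[\ell(\mathbf{x};\boldsymbol\theta)]$, $\hat J(\boldsymbol\theta;\mathbf{x}_1^N)=\frac1N\sum_{i=1}^N\ell(\mathbf{x}_i;\boldsymbol\theta)$, $L(\boldsymbol\theta)=\tfrac12\mathbb{E}_{\mathbf{x}}\|s(\mathbf{x};\boldsymbol\theta)-\nabla_{\mathbf{x}}\log p(\mathbf{x})\|_2^2$, $\boldsymbol\theta^*\in\arg\min_{\boldsymbol\Theta}L$, and $\Delta_N(\boldsymbol\theta)=(\hat J(\boldsymbol\theta;\mathbf{x}_1^N)-J(\boldsymbol\theta))-(\hat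 J(\boldsymbol\theta^*;\mathbf{x}_1^N)-J(\boldsymbol\theta^* ))$. Standing assumptions: (R) $s(\cdot;\boldsymbol\theta)$ and $\nabla_{\mathbf{x}}\log p$ are differentiable in $\mathbf{x}$, $\mathbb{E}_{\mathbf{x}}\|s(\mathbf{x};\boldsymbol\theta)\|_2^2<\infty$ for all $\boldsymbol\theta$, and $\mathbb{E}_{\mathbf{x}}\|\nabla_{\mathbf{x}}\log p(\mathbf{x})\|_2^2<\infty$. (B) For every $\boldsymbol\theta$ and every sequence $\mathbf{x}_i\in\mathcal{X}$ with $\mathbf{x}_i\to\mathbf{x}\in\partial\mathcal{X}$, $s(\mathbf{x}_i;\boldsymbol\theta)p(\mathbf{x}_i)\to\mathbf{0}$. (Under (R),(B), $L(\boldsymbol\theta)=J(\boldsymbol\theta)+C$ with $C$ independent of $\boldsymbol\theta$.) (C) $\boldsymbol\Theta$ is compact. (Lip) There are $L_1,L_2$ with $\mathbb{E}[L_1(\mathbf{x})^2],\mathbb{E}[L_2(\mathbf{x})^2]<\infty$ such that $\|\nabla_{\mathbf{x}}s(\mathbf{x};\boldsymbol\theta_1)-\nabla_{\mathbf{x}}s(\mathbf{x};\boldsymbol\theta_2)\|_F\le L_1(\mathbf{x})\|\boldsymbol\theta_1-\boldsymbol\theta_2\|_2$ and $\|s(\mathbf{x};\boldsymbol\theta_1)s(\mathbf{x};\boldsymbol\theta_1)^T-s(\mathbf{x};\boldsymbol\theta_2)s(\mathbf{x};\boldsymbol\theta_2)^T\|_F\le L_2(\mathbf{x})\|\boldsymbol\theta_1-\boldsymbol\theta_2\|_2$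 for all $\boldsymbol\theta_1,\boldsymbol\theta_2$. (E) $\hat{\boldsymbol\theta}_N$ exactly minimizes $\hat J(\cdot;\mathbf{x}_1^N)$ over $\boldsymbol\Theta$. (Q) There exist $\lambda,\eta>0$ with $J(\boldsymbol\theta)\ge J(\boldsymbol\theta^* )+\lambda\|\boldsymbol\theta-\boldsymbol\theta^*\|_2^2$ whenever $\|\boldsymbol\theta-\boldsymbol\theta^*\|_2<\eta$, and $J(\boldsymbol\theta)\ge J(\boldsymbol\theta^* )+\lambda\eta^2$ whenever $\|\boldsymbol\theta-\boldsymbol\theta^*\|_2\ge\eta$. *)

From HB Require Import structures.
From mathcomp Require Import all_boot all_order all_algebra.
From mathcomp Require Import all_classical all_reals all_analysis measurable_realfun.
Set Implicit Arguments. Unset Strict Implicit. Unset Printing Implicit Defensive.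
Import Order.TTheory GRing.Theory Num.Theory.
Import numFieldNormedType.Exports.
Local Open Scope classical_set_scope.
Local Open Scope ring_scope.

(* R^D is modelled by row vectors 'rV[R]_D. *)
Definition borelRV (R : realType) (D : nat) :=
  g_sigma_algebraType (@open 'rV[R]_D).

Definition norm2 (R : realType) (n : nat) (v : 'rV[R]_n) : R :=
  Num.sqrt (\sum_(i < n) v 0 i ^+ 2).
Definition frob (R : realType) (m n : nat) (A : 'M[R]_(m, n)) : R :=
  Num.sqrt (\sum_(i < m) \sum_(j < n) A i j ^+ 2).

Definition grad (R : realType) (D : nat) (f : 'rV[R]_D -> R) (x : 'rV[R]_D)
  : 'rV[R]_D := \row_(i < D) derive f x (delta_mx 0 i).

(* lam is Lebesgue measure on the Borel sets of R^D: the measure of every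
   closed box [a,b] is the product of its side lengths (this determines the
   measure uniquely on Borel sets). *)
Definition is_lebesgue (R : realType) (D : nat)
  (lam : {measure set (borelRV R D) -> \bar R}) : Prop :=
  forall a b : 'rV[R]_D, (forall i, a 0 i <= b 0 i) ->
    lam [set x : borelRV R D | forall i, a 0 i <= (x : 'rV[R]_D) 0 i <= b 0 i]
    = (\prod_(i < D) (b 0 i - a 0 i))%:E.

Definition Ex (R : realType) (D : nat) (lam : {measure set (borelRV R D) -> \bar R})
  (p : 'rV[R]_D -> R) (f : 'rV[R]_D -> R) : \bar R :=
  (\int[lam]_(x in [set: borelRV R D]) (f x * p x)%:E)%E.

Definition ell (R : realType) (D P : nat) (s : 'rV[R]_D -> 'rV[R]_P -> 'rV[R]_D)
  (x : 'rV[R]_D) (th : 'rV[R]_P) : R :=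
  \tr (jacobian (fun y => s y th) x) + 2^-1 * norm2 (s x th) ^+ 2.

(* J(theta) = E_x[l(x;theta)] (real valued; integrability is assumed) *)
Definition Jfun (R : realType) (D P : nat) (lam : {measure set (borelRV R D) -> \bar R})
  (p : 'rV[R]_D -> R) (s : 'rV[R]_D -> 'rV[R]_P -> 'rV[R]_D) (th : 'rV[R]_P) : R :=
  fine (Ex lam p (fun x => ell s x th)).

Definition Jhat (R : realType) (D P : nat) (d : measure_display) (Omega : measurableType d)
  (s : 'rV[R]_D -> 'rV[R]_P -> 'rV[R]_D) (Xs : nat -> Omega -> 'rV[R]_D)
  (N : nat) (th : 'rV[R]_P) (w : Omega) : R :=
  N%:R^-1 * \sum_(i < N) ell s (Xs i w) th.

Definition Lscore (R : realType) (D P : nat) (lam : {measure set (borelRV R D) -> \bar R})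
  (p : 'rV[R]_D -> R) (s : 'rV[R]_D -> 'rV[R]_P -> 'rV[R]_D) (th : 'rV[R]_P) : \bar R :=
  Ex lam p (fun x => 2^-1 * norm2 (s x th - grad (fun y => ln (p y)) x) ^+ 2).

Definition DeltaN (R : realType) (D P : nat) (lam : {measure set (borelRV R D) -> \bar R})
  (p : 'rV[R]_D -> R) (d : measure_display) (Omega : measurableType d)
  (s : 'rV[R]_D -> 'rV[R]_P -> 'rV[R]_D) (Xs : nat -> Omega -> 'rV[R]_D)
  (thstar : 'rV[R]_P) (N : nat) (th : 'rV[R]_P) (w : Omega) : R :=
  (Jhat s Xs N th w - Jfun lam p s th) - (Jhat s Xs N thstar w - Jfun lam p s thstar).

Definition supJ (R : realType) (D P : nat) (lam : {measure set (borelRV R D) -> \bar R})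
  (p : 'rV[R]_D -> R) (d : measure_display) (Omega : measurableType d)
  (s : 'rV[R]_D -> 'rV[R]_P -> 'rV[R]_D) (Xs : nat -> Omega -> 'rV[R]_D)
  (Theta : set 'rV[R]_P) (N : nat) (w : Omega) : \bar R :=
  ereal_sup [set (`|Jhat s Xs N th w - Jfun lam p s th|)%:E | th in Theta].

Definition supDelta (R : realType) (D P : nat) (lam : {measure set (borelRV R D) -> \bar R})
  (p : 'rV[R]_D -> R) (d : measure_display) (Omega : measurableType d)
  (s : 'rV[R]_D -> 'rV[R]_P -> 'rV[R]_D) (Xs : nat -> Omega -> 'rV[R]_D)
  (Theta : set 'rV[R]_P) (thstar : 'rV[R]_P) (N : nat) (delta : R) (w : Omega) : \bar R :=
  ereal_sup [set (`|DeltaN lam p s Xs thstar N th w|)%:E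
            | th in [set th | Theta th /\ norm2 (th - thstar) <= delta]].

Definition mutually_independent (R : realType) (D : nat) (d : measure_display)
  (Omega : measurableType d) (Pr : probability Omega R) (Xs : nat -> Omega -> 'rV[R]_D)
  : Prop :=
  forall (I : seq nat) (A : nat -> set (borelRV R D)), uniq I ->
    (forall i, measurable (A i)) ->
    Pr (\bigcap_(i in [set i | i \in I]) (Xs i @^-1` A i)) =
    (\prod_(i <- I) Pr (Xs i @^-1` A i))%E.

From HB Require Import structures.
From mathcomp Require Import all_boot all_order all_algebra.
From mathcomp Require Import all_classical all_reals all_analysis measurable_realfun.
From mathcomp Require Import ring lra.
Import Order.TTheory GRing.Theory Num.Theory.
Import numFieldNormedType.Exports.
Local Open Scope classical_set_scope.
Local Open Scope ring_scope.

(** Since θ̂ minimizes Ĵ, the excess risk J(θ̂) − J(θ* ) is at most |Δ_N(θ̂)|.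
    If ‖θ̂ − θ*‖ ≥ η, the quadratic-growth condition (Q) then forces
    sup_Θ |Ĵ − J| ≥ λη²/2, an event of probability at most ε/2 by Markov once
    N ≥ N'.  Otherwise (Q) gives λ‖θ̂ − θ*‖² ≤ sup_{‖θ − θ*‖ ≤ δ} |Δ_N| for every
    δ ≥ ‖θ̂ − θ*‖; peeling the distance into the dyadic shells (2^j u, 2^(j+1) u]
    with u = 8 C_θ √P / (ελ√N) and applying Markov on each shell bounds the
    probability that ‖θ̂ − θ*‖ > u by Σ_j ε 2^-(j+2) ≤ ε/2. *)

Section probability_bounds.
Context {d : measure_display} {T : measurableType d} {R : realType} (Pr : probability T R).
Local Open Scope ereal_scope.

Lemma measurable_superlevel (f : T -> \bar R) (a : \bar R) :
  measurable_fun setT f -> measurable [set x | a <= f x].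
Proof.
by move=> mf; rewrite -[X in measurable X]setTI; exact: emeasurable_fun_c_infty.
Qed.

Lemma markov_superlevel {f : T -> \bar R} (a : R) {c : R} :
  measurable_fun setT f -> (forall x, 0 <= f x) -> (0 < a)%R ->
  \int[Pr]_(x in setT) f x <= c%:E ->
  Pr [set x | a%:E <= f x] <= (c / a)%:E.
Proof.
move=> mf f0 a0 fc.
have := le_integral_comp_abse Pr measurableT (@measurable_id _ _ setT)
  (fun r h => h) (fun x y _ _ h => h) mf a0.
rewrite setTI /=.
under eq_set do rewrite gee0_abs//.
under eq_integral do rewrite gee0_abs//.
move=> /le_trans /(_ fc).
rewrite -(fineK (fin_num_measure _ _ (measurable_superlevel f a%:E mf))).
by rewrite -EFinM !lee_fin ler_pdivlMr // mulrC.
Qed.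

Lemma probability_setC_ge (A : set T) (e : R) :
  measurable A -> Pr A <= e%:E -> (1 - e)%:E <= Pr (~` A).
Proof.
move=> mA; rewrite probability_setC // -(fineK (fin_num_measure _ _ mA)).
by rewrite -EFinB !lee_fin => ?; lra.
Qed.

End probability_bounds.

Lemma sum_inv_pow2_le2 (R : realFieldType) n : \sum_(k < n) ((2 : R) ^+ k)^-1 <= 2.
Proof.
suff -> : \sum_(k < n) ((2 : R) ^+ k)^-1 = 2 - 2 / 2 ^+ n.
  by rewrite gerBl divr_ge0 ?exprn_ge0.
elim: n => [|n IH]; first by rewrite big_ord0 expr0 divr1 subrr.
rewrite big_ord_recr /= IH exprS invfM.
have : (2 : R) ^+ n != 0 by rewrite expf_neq0 // pnatr_eq0.
by move=> ?; field.
Qed.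

Lemma exists_pow2_ge {R : archiRealFieldType} (x u : R) :
  0 < u -> exists n : nat, x <= 2 ^+ n * u.
Proof.
move=> u0; have [x_le0|x_gt0] := lerP x 0.
  by exists 0%N; rewrite (le_trans x_le0) // mulr_ge0 ?exprn_ge0 ?ltW.
pose n := Num.Def.archi_bound (x / u).
have xu_lt : x / u < n%:R by apply: archi_boundP; rewrite divr_ge0 ?ltW.
have n_le : (n%:R : R) <= 2 ^+ n by rewrite -natrX ler_nat ltnW // ltn_expl.
by exists n; rewrite -ler_pdivrMr //; exact: ltW (lt_le_trans xu_lt n_le).
Qed.

Lemma sample_size_bound (R : rcfType) (c eps lambda eta n : R) :
  0 < eps -> 0 < lambda -> 0 < eta -> 0 < n ->
  16 * c ^+ 2 / (eps ^+ 2 * lambda ^+ 2 * eta ^+ 4) <= n ->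
  c / Num.sqrt n / (lambda * eta ^+ 2 / 2) <= eps / 2.
Proof.
move=> eps_gt0 lambda_gt0 eta_gt0 n_gt0.
set q := eps * lambda * eta ^+ 2.
have q_gt0 : 0 < q by rewrite !mulr_gt0 ?exprn_gt0.
have sn_gt0 : 0 < Num.sqrt n by rewrite sqrtr_gt0.
have -> : eps ^+ 2 * lambda ^+ 2 * eta ^+ 4 = q ^+ 2 by rewrite /q; ring.
rewrite ler_pdivrMr ?exprn_gt0 // => n_ge.
have c4_le : 4 * c <= q * Num.sqrt n.
  have : (4 * c) ^+ 2 <= (q * Num.sqrt n) ^+ 2.
    by rewrite [X in _ <= X]exprMn sqr_sqrtr ?(ltW n_gt0); lra.
  have : 0 < q * Num.sqrt n by rewrite mulr_gt0.
  by move=> ? ?; nra.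
have -> : c / Num.sqrt n / (lambda * eta ^+ 2 / 2) =
    4 * c / (q * Num.sqrt n) * (eps / 2).
  by rewrite /q; field; rewrite !gt_eqF ?exprn_gt0.
apply: ler_piMl; first by rewrite divr_ge0 // ltW.
by rewrite ler_pdivrMr ?mul1r // mulr_gt0.
Qed.

Lemma norm2_subrr (R : realType) n (v : 'rV[R]_n) : norm2 (v - v) = 0.
Proof. by rewrite subrr /norm2 big1 ?sqrtr0 // => i _; rewrite mxE expr0n. Qed.

Section localization.
Context {d : measure_display} {T : measurableType d} {R : realType} (Pr : probability T R).
Context {f : R -> T -> \bar R} {r : T -> R} {k lambda eta : R}.
Hypotheses (mf : forall delta, measurable_fun setT (f delta))
  (f_ge0 : forall delta x, 0 < delta -> (0 <= f delta x)%E)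
  (f_int : forall delta, 0 < delta ->
     (\int[Pr]_(x in setT) f delta x <= (k * delta)%:E)%E)
  (lambda_gt0 : 0 < lambda)
  (r_near : forall x delta, r x < eta -> r x <= delta ->
     ((lambda * r x ^+ 2)%:E <= f delta x)%E).

Lemma localization_rate_ge0 : 0 <= k.
Proof.
have : (0 <= \int[Pr]_(x in setT) f 1 x)%E.
  by apply: integral_ge0 => x _; exact: f_ge0.
by move=> /le_trans /(_ (f_int 1 ltr01)); rewrite lee_fin mulr1.
Qed.

Lemma localization_null : 0 < eta -> k = 0 ->
  exists A, [/\ measurable A, Pr A = 0%E & forall x, ~ A x -> r x < eta -> r x <= 0].
Proof.
move=> eta_gt0 k0.
have int0 : (\int[Pr]_(x in setT) `|f eta x| = 0)%E.
  under eq_integral do rewrite gee0_abs ?f_ge0 //.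
  apply/eqP; rewrite eq_le integral_ge0 => [|x _]; last exact: f_ge0.
  by rewrite andbT; have := f_int eta eta_gt0; rewrite k0 mul0r.
have [A [mA PrA fA]] := (ae_eq_integral_abs Pr measurableT (mf eta)).1 int0.
exists A; split=> // x nAx rx_lt.
have fx0 : f eta x = 0%E by apply: contra_notP nAx => fx0; apply: fA => /(_ I).
have := r_near x eta rx_lt (ltW rx_lt).
rewrite fx0 lee_fin pmulr_rle0 // le_eqVlt ltNge sqr_ge0 orbF sqrf_eq0.
by move=> /eqP ->.
Qed.

Definition shell (u : R) (j : nat) : set T :=
  [set x | ((lambda * (2 ^+ j * u) ^+ 2)%:E <= f (2 ^+ j.+1 * u) x)%E].

Lemma measurable_shell u j : measurable (shell u j).
Proof. exact: measurable_superlevel. Qed.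

Lemma probability_shell u j : 0 < u ->
  (Pr (shell u j) <= (2 * k / (lambda * u) / 2 ^+ j)%:E)%E.
Proof.
rewrite /shell => u_gt0; have delta_gt0 : 0 < 2 ^+ j.+1 * u by rewrite mulr_gt0 ?exprn_gt0.
have a_gt0 : 0 < lambda * (2 ^+ j * u) ^+ 2 by rewrite mulr_gt0 ?exprn_gt0 ?mulr_gt0.
apply: le_trans (markov_superlevel Pr _ (mf _) (fun x => f_ge0 _ x delta_gt0) a_gt0
  (f_int _ delta_gt0)) _.
suff -> : k * (2 ^+ j.+1 * u) / (lambda * (2 ^+ j * u) ^+ 2) =
    2 * k / (lambda * u) / 2 ^+ j by [].
by rewrite exprS; field; rewrite !gt_eqF ?exprn_gt0.
Qed.

Lemma shells_cover u n x : 0 < u -> u < r x -> r x <= 2 ^+ n * u -> r x < eta ->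
  (\big[setU/set0]_(j < n) shell u j) x.
Proof.
move=> u_gt0 u_lt; elim: n => [|n IH] rx_le rx_lt.
  by move: (lt_le_trans u_lt rx_le); rewrite expr0 mul1r ltxx.
rewrite big_ord_recr /=.
have [rx_le_n|rx_gt_n] := lerP (r x) (2 ^+ n * u); first by left; exact: IH.
right; apply: le_trans (r_near x _ rx_lt rx_le).
have : 0 <= 2 ^+ n * u by rewrite mulr_ge0 ?exprn_ge0 ?ltW.
by rewrite lee_fin ler_pM2l // => ?; nra.
Qed.

Lemma localization_peeling eps : 0 < k -> 0 < eps ->
  exists A, [/\ measurable A, (Pr A <= (eps / 2)%:E)%E &
    forall x, ~ A x -> r x < eta -> r x <= 8 * k / (eps * lambda)].
Proof.
move=> k_gt0 eps_gt0; set u := 8 * k / (eps * lambda).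
have u_gt0 : 0 < u by rewrite divr_gt0 ?mulr_gt0.
have [n eta_le] := exists_pow2_ge eta u u_gt0.
exists (\big[setU/set0]_(j < n) shell u j); split.
- by apply: bigsetU_measurable => j _; exact: measurable_shell.
- have /le_trans -> // :=
    Boole_inequality Pr (fun j (_ : (j < n)%N) => measurable_shell u j).
  have /le_trans -> // := lee_sum (index_enum 'I_n) (P := xpredT)
    (fun (j : 'I_n) _ => probability_shell u j u_gt0).
  rewrite sumEFin lee_fin -mulr_sumr.
  have -> : 2 * k / (lambda * u) = eps / 4 by rewrite /u; field; rewrite !gt_eqF.
  by have := sum_inv_pow2_le2 R n; nra.
- move=> x nAx rx_lt; rewrite leNgt; apply/negP => u_lt; apply: nAx.
  exact: shells_cover (le_trans (ltW rx_lt) eta_le) rx_lt.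
Qed.

Lemma localization eps : 0 < eta -> 0 < eps ->
  exists A, [/\ measurable A, (Pr A <= (eps / 2)%:E)%E &
    forall x, ~ A x -> r x < eta -> r x <= 8 * k / (eps * lambda)].
Proof.
move=> eta_gt0 eps_gt0; have := localization_rate_ge0.
rewrite le_eqVlt => /orP[/eqP k0|k_gt0]; last exact: localization_peeling.
have [A [mA PrA rA]] := localization_null eta_gt0 (esym k0).
exists A; split=> //; first by rewrite PrA lee_fin divr_ge0 ?ltW.
by rewrite -k0 mulr0 mul0r.
Qed.

End localization.

Section score_matching_deviations.
Context {R : realType} {D P : nat} {lam : {measure set (borelRV R D) -> \bar R}}
  {p : 'rV[R]_D -> R} {d : measure_display} {Omega : measurableType d}
  {s : 'rV[R]_D -> 'rV[R]_P -> 'rV[R]_D} {Xs : nat -> Omega -> 'rV[R]_D}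
  {Theta : set 'rV[R]_P} {thstar : 'rV[R]_P} {thhat : nat -> Omega -> 'rV[R]_P}
  {lambda eta : R}.
Hypotheses (thstar_in : Theta thstar)
  (thhat_min : forall N w, Theta (thhat N w) /\
      (forall th, Theta th -> Jhat s Xs N (thhat N w) w <= Jhat s Xs N th w)).
Local Notation J := (Jfun lam p s).

Lemma supJ_ge0 N w : (0 <= supJ lam p s Xs Theta N w)%E.
Proof.
apply: le_trans (ereal_sup_ubound _); last by exists thstar.
by rewrite lee_fin.
Qed.

Lemma supDelta_ge0 N delta w : 0 <= delta ->
  (0 <= supDelta lam p s Xs Theta thstar N delta w)%E.
Proof.
move=> delta_ge0; apply: le_trans (ereal_sup_ubound _); last first.
  by exists thstar => //; split; rewrite ?norm2_subrr.
by rewrite lee_fin.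
Qed.

Lemma le_supJ N w th : Theta th ->
  ((`|Jhat s Xs N th w - J th|)%:E <= supJ lam p s Xs Theta N w)%E.
Proof. by move=> th_in; apply: ereal_sup_ubound; exists th. Qed.

Lemma excess_risk_le_DeltaN N w :
  J (thhat N w) - J thstar <= `|DeltaN lam p s Xs thstar N (thhat N w) w|.
Proof.
have := (thhat_min N w).2 _ thstar_in; rewrite /DeltaN -normrN => Jhat_le.
by apply: le_trans (ler_norm _); lra.
Qed.

Hypothesis J_far : forall th, Theta th -> norm2 (th - thstar) >= eta ->
  J th >= J thstar + lambda * eta ^+ 2.

Lemma far_supJ N w : eta <= norm2 (thhat N w - thstar) ->
  ((lambda * eta ^+ 2 / 2)%:E <= supJ lam p s Xs Theta N w)%E.
Proof.
move=> far; have thhat_in := (thhat_min N w).1.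
have := J_far _ thhat_in far; have := excess_risk_le_DeltaN N w.
have := ler_normB (Jhat s Xs N (thhat N w) w - J (thhat N w))
                  (Jhat s Xs N thstar w - J thstar).
have := le_supJ N w _ thhat_in; have := le_supJ N w _ thstar_in; rewrite /DeltaN.
set a := `|_ - J (thhat N w)|; set b := `|_ - J thstar| => b_le a_le.
by have [ab|ab] := lerP a b => ? ? ?; [apply: le_trans b_le | apply: le_trans a_le];
  rewrite lee_fin; lra.
Qed.

Hypothesis J_near : forall th, Theta th -> norm2 (th - thstar) < eta ->
  J th >= J thstar + lambda * norm2 (th - thstar) ^+ 2.

Lemma near_supDelta N w delta :
  norm2 (thhat N w - thstar) < eta -> norm2 (thhat N w - thstar) <= delta ->
  ((lambda * norm2 (thhat N w - thstar) ^+ 2)%:E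
    <= supDelta lam p s Xs Theta thstar N delta w)%E.
Proof.
move=> near near_delta; have thhat_in := (thhat_min N w).1.
apply: le_trans (ereal_sup_ubound _); last by exists (thhat N w).
have := J_near _ thhat_in near; have := excess_risk_le_DeltaN N w.
by rewrite lee_fin; lra.
Qed.

End score_matching_deviations.

Theorem theorem2
  (R : realType) (D P : nat)
  (lam : {measure set (borelRV R D) -> \bar R}) (Hlam : is_lebesgue lam)
  (* density p with support X *)
  (p : 'rV[R]_D -> R) (X : set 'rV[R]_D)
  (Hp0 : forall x, 0 <= p x)
  (Hpm : measurable_fun [set: borelRV R D] (p : borelRV R D -> R))
  (Hp1 : (\int[lam]_(x in [set: borelRV R D]) (p x)%:E = 1)%E)
  (HX : X = [set x | 0 < p x])
  (HXshape : X = [set: 'rV[R]_D] \/ (open X /\ bounded_set X))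
  (* i.i.d. sample x_1, x_2, ... ~ p on a probability space *)
  (d : measure_display) (Omega : measurableType d) (Pr : probability Omega R)
  (Xs : nat -> Omega -> 'rV[R]_D)
  (HXm : forall i, measurable_fun [set: Omega] (Xs i : Omega -> borelRV R D))
  (HXlaw : forall i (A : set (borelRV R D)), measurable A ->
      Pr (Xs i @^-1` A) = (\int[lam]_(x in A) (p x)%:E)%E)
  (HXind : mutually_independent Pr Xs)
  (Theta : set 'rV[R]_P) (s : 'rV[R]_D -> 'rV[R]_P -> 'rV[R]_D)
  (thstar : 'rV[R]_P)
  (* J is well defined: l(.;theta) is p-integrable *)
  (Hint : forall th, Theta th ->
      lam.-integrable [set: borelRV R D] (fun x => (ell s x th * p x)%:E))
  (* theta* in argmin_Theta L *)
  (Hstar : Theta thstar /\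
      (forall th, Theta th -> (Lscore lam p s thstar <= Lscore lam p s th)%E))
  (* (R) *)
  (HRs : forall th, Theta th -> forall x, differentiable (fun y => s y th) x)
  (HRp : forall x, X x ->
      differentiable (fun y => ln (p y)) x /\
      differentiable (grad (fun y => ln (p y))) x)
  (HRs2 : forall th, Theta th ->
      (Ex lam p (fun x => (norm2 (s x th) ^+ 2)%R) < +oo)%E)
  (HRp2 : (Ex lam p (fun x => (norm2 (grad (fun y => ln (p y)) x) ^+ 2)%R) < +oo)%E)
  (* (B) *)
  (HB : forall th, Theta th -> forall (u : nat -> 'rV[R]_D) (x : 'rV[R]_D),
      (forall i, X (u i)) -> u @ \oo --> x -> (closure X `\` X) x ->
      (fun i => p (u i) *: s (u i) th) @ \oo --> (0 : 'rV[R]_D))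
  (* (C) *)
  (HC : compact Theta)
  (* (Lip) *)
  (L1 L2 : 'rV[R]_D -> R)
  (HL1 : (Ex lam p (fun x => (L1 x ^+ 2)%R) < +oo)%E)
  (HL2 : (Ex lam p (fun x => (L2 x ^+ 2)%R) < +oo)%E)
  (HLip1 : forall x th1 th2, Theta th1 -> Theta th2 ->
      frob (jacobian (fun y => s y th1) x - jacobian (fun y => s y th2) x)
      <= L1 x * norm2 (th1 - th2))
  (HLip2 : forall x th1 th2, Theta th1 -> Theta th2 ->
      frob ((s x th1)^T *m s x th1 - (s x th2)^T *m s x th2)
      <= L2 x * norm2 (th1 - th2))
  (* (E) exact empirical minimizer *)
  (thhat : nat -> Omega -> 'rV[R]_P)
  (HE : forall N w, Theta (thhat N w) /\
      (forall th, Theta th -> Jhat s Xs N (thhat N w) w <= Jhat s Xs N th w))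
  (* (Q) *)
  (lambda eta : R) (Hlambda : 0 < lambda) (Heta : 0 < eta)
  (HQ1 : forall th, Theta th -> norm2 (th - thstar) < eta ->
      Jfun lam p s th >= Jfun lam p s thstar + lambda * norm2 (th - thstar) ^+ 2)
  (HQ2 : forall th, Theta th -> norm2 (th - thstar) >= eta ->
      Jfun lam p s th >= Jfun lam p s thstar + lambda * eta ^+ 2)
  (* the constants C_S and C_theta *)
  (CS Cth : R)
  (HCSm : forall N, measurable_fun [set: Omega] (supJ lam p s Xs Theta N : Omega -> \bar R))
  (HCS : forall N : nat, (0 < N)%N ->
      (\int[Pr]_(w in [set: Omega]) supJ lam p s Xs Theta N w
        <= (CS / Num.sqrt N%:R)%:E)%E)
  (HCthm : forall N delta, measurable_fun [set: Omega]
      (supDelta lam p s Xs Theta thstar N delta : Omega -> \bar R))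
  (HCth : forall (delta : R) (N : nat), 0 < delta -> (0 < N)%N ->
      (\int[Pr]_(w in [set: Omega]) supDelta lam p s Xs Theta thstar N delta w
        <= (Cth * Num.sqrt P%:R * delta / Num.sqrt N%:R)%:E)%E) :
  forall (eps : R), 0 < eps ->
  forall N : nat, 16 * CS ^+ 2 / (eps ^+ 2 * lambda ^+ 2 * eta ^+ 4) <= N%:R ->
  (* "with probability at least 1 - eps" (inner probability) *)
  exists A : set Omega, measurable A /\
    A `<=` [set w | Num.sqrt N%:R * norm2 (thhat N w - thstar)
                     <= 8 * Cth * Num.sqrt P%:R / (eps * lambda)] /\
    ((1 - eps)%:E <= Pr A)%E.
Proof.
move=> eps eps_gt0 N N_ge; have [thstar_in _] := Hstar.
pose k n := Cth * Num.sqrt P%:R / Num.sqrt n%:R.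
have supDelta_pos_ge0 n delta w : 0 < delta ->
    (0 <= supDelta lam p s Xs Theta thstar n delta w)%E.
  by move=> /ltW; exact: supDelta_ge0.
have supDelta_int n delta : (0 < n)%N -> 0 < delta ->
    (\int[Pr]_(w in setT) supDelta lam p s Xs Theta thstar n delta w
      <= (k n * delta)%:E)%E.
  by move=> n_gt0 delta_gt0; rewrite /k mulrAC; exact: HCth.
have [N0|N_gt0] := posnP N.
  have := localization_rate_ge0 Pr (supDelta_pos_ge0 1%N) (supDelta_int 1%N ^~ isT).
  rewrite /k sqrtr1 divr1 => C_ge0.
  exists setT; split=> //; split; last first.
    by rewrite probability_setT lee_fin gerDl oppr_le0 ltW.
  move=> w _ /=; rewrite N0 sqrtr0 mul0r -(mulrA 8).
  by apply: divr_ge0; [exact: mulr_ge0 | exact/ltW/mulr_gt0].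
pose Far := [set w | ((lambda * eta ^+ 2 / 2)%:E <= supJ lam p s Xs Theta N w)%E].
have mFar : measurable Far := measurable_superlevel _ _ (HCSm N).
have PrFar : (Pr Far <= (eps / 2)%:E)%E.
  have a_gt0 : 0 < lambda * eta ^+ 2 / 2 by rewrite divr_gt0 ?mulr_gt0 ?exprn_gt0.
  apply: le_trans (markov_superlevel Pr _ (HCSm N) (supJ_ge0 thstar_in N) a_gt0
    (HCS N N_gt0)) _.
  by rewrite lee_fin sample_size_bound ?ltr0n.
have [Near [mNear PrNear near_bound]] := localization Pr (HCthm N)
  (supDelta_pos_ge0 N) (supDelta_int N ^~ N_gt0) Hlambda
  (near_supDelta thstar_in HE HQ1 N) eps Heta eps_gt0.
exists (~` (Far `|` Near)); split; first exact/measurableC/measurableU.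
split.
  move=> w /= /not_orP[nFar nNear].
  have near : norm2 (thhat N w - thstar) < eta.
    by rewrite ltNge; apply/negP => /(far_supJ thstar_in HE HQ2); exact: nFar.
  have sN_gt0 : 0 < Num.sqrt (N%:R : R) by rewrite sqrtr_gt0 ltr0n.
  rewrite mulrC -ler_pdivlMr //.
  have -> : 8 * Cth * Num.sqrt P%:R / (eps * lambda) / Num.sqrt N%:R =
      8 * k N / (eps * lambda) by rewrite /k; field; rewrite !gt_eqF.
  exact: near_bound.
apply: probability_setC_ge; first exact: measurableU.
apply: le_trans (measureU2 _ mFar mNear) _.
by rewrite [eps in (eps%:E)%E](splitr eps) EFinD leeD.
Qed.
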